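(* Let $\gamma$ be continuous, increasing and concave near the origin, with $\lim_{x\downarrow0}\gamma(x)=0$, and assume $\mathrm{ind}_*(\gamma)>0$. Then $\gamma$ satisfies Condition $(\mathbf{C_{0+}})$: for every $\varepsilon\in(0,1)$ there exist constants $\mathsf{c}_\varepsilon>0$ and $x_\varepsilon>0$ such that $$\int_0^{1/2}\gamma(xy)\frac{dy}{y\sqrt{\log(1/y)}}\le \mathsf{c}_\varepsilon\,(\gamma(x))^{1-\varepsilon}\quad\text{for all }0<x<x_\varepsilon .$$
   Context: $\mathrm{ind}_*(\gamma):=\sup\{\alpha:\gamma(x)=o(x^\alpha)\text{ as }x\downarrow0\}$. *)

From HB Require Import structures.
From mathcomp Require Import all_boot all_order all_algebra.
From mathcomp Require Import all_classical all_reals all_analysis.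
Set Implicit Arguments. Unset Strict Implicit. Unset Printing Implicit Defensive.
Import Order.TTheory GRing.Theory Num.Theory.
Import numFieldNormedType.Exports.
Local Open Scope classical_set_scope.
Local Open Scope ring_scope.

(* The lower index ind_*(gamma) := sup { a : gamma(x) = o(x^a) as x -> 0+ },
   taken in the extended reals (the set may be empty or unbounded). *)
Definition ind_star (R : realType) (gamma : R -> R) : \bar R :=
  ereal_sup [set a%:E | a in
    [set a : R | (fun x => gamma x / x `^ a) @ 0^'+ --> 0]].

From HB Require Import structures.
From mathcomp Require Import all_boot all_order all_algebra.
From mathcomp Require Import all_classical all_reals all_analysis.
From mathcomp Require Import measurable_realfun zify ring.
Import Order.TTheory GRing.Theory Num.Theory.
Import numFieldNormedType.Exports.
Local Open Scope classical_set_scope.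
Local Open Scope ring_scope.

(* Since ind_*(gamma) > 0, gamma t <= t ^ a for small t and some 0 < a <= 1.
   For 0 < y <= 1/2, monotonicity and interpolation give
   gamma (x y) <= gamma x ^ (1 - eps) * gamma (x y) ^ eps <= gamma x ^ (1 - eps) * y ^ (a eps),
   while y sqrt (ln (1/y)) >= y sqrt (ln 2).  So the integral is at most
   gamma x ^ (1 - eps) / sqrt (ln 2) times the integral of y ^ (a eps - 1) over ]0, 1/2],
   which is finite: on each shell ]2 ^ -(k+2), 2 ^ -(k+1)] it is bounded by a term of a
   geometric series of ratio 2 ^ -(a eps). *)

(* The nonnegative integral is a supremum over simple functions below the integrand,
   so it is monotone without any measurability assumption. *)
Lemma ge0_le_integral_nonmeasurable d (T : measurableType d) (R : realType)
    (mu : {measure set T -> \bar R}) (D : set T) (f g : T -> \bar R) :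
  (forall x, D x -> 0 <= f x)%E -> (forall x, D x -> f x <= g x)%E ->
  (\int[mu]_(x in D) f x <= \int[mu]_(x in D) g x)%E.
Proof.
move=> f0 fg; have g0 x : D x -> (0 <= g x)%E.
  by move=> Dx; exact: le_trans (f0 _ Dx) (fg _ Dx).
rewrite !ge0_integralE//; apply: ge_ereal_sup => _ [h hf <-].
by apply: ereal_sup_ubound; exists h => //= x; exact: le_trans (hf x) (lee_restrict fg x).
Qed.

Lemma le0_ger_powR (R : realType) (r x y : R) : r <= 0 -> 0 < x -> x <= y ->
  y `^ r <= x `^ r.
Proof.
move=> r0 x0 xy; have y0 := lt_le_trans x0 xy.
have inv_powRN z : z `^ r = (z `^ (- r))^-1 by rewrite -powRN opprK.
rewrite !inv_powRN lef_pV2 ?posrE ?powR_gt0//.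
by rewrite ge0_ler_powR ?oppr_ge0// nnegrE ltW.
Qed.

Lemma ler_powR_interpolate (R : realType) (s g t e : R) :
  0 <= s -> s <= g -> s <= t -> 0 <= e <= 1 -> s <= g `^ (1 - e) * t `^ e.
Proof.
move=> s0 sg st /andP[e0 e1].
have {1}-> : s = s `^ (1 - e) * s `^ e.
  by rewrite -powRD ?subrK ?oner_eq0// powRr1.
apply: ler_pM; rewrite ?powR_ge0//; apply: ge0_ler_powR;
  by rewrite ?nnegrE ?subr_ge0// (le_trans s0).
Qed.

Lemma div_sqrt_ln_inv_le (R : realType) (s g y a e : R) :
  0 <= s <= g -> s <= y `^ a -> 0 < y <= 2^-1 -> 0 <= e <= 1 ->
  s / (y * Num.sqrt (ln y^-1)) <= g `^ (1 - e) / Num.sqrt (ln 2) * y `^ (a * e - 1).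
Proof.
move=> /andP[s0 sg] sya /andP[y0 yh] e01.
have ln2_gt0 : 0 < ln (2 : R) by rewrite ln_gt0// ltr1n.
have ln2_le : ln 2 <= ln y^-1.
  by rewrite ler_ln ?posrE ?invr_gt0// -[2]invrK lef_pV2 ?posrE ?invr_gt0.
have den_gt0 : 0 < y * Num.sqrt (ln 2) by rewrite mulr_gt0 ?sqrtr_gt0.
apply: (@le_trans _ _ (s / (y * Num.sqrt (ln 2)))).
  have den_le : y * Num.sqrt (ln 2) <= y * Num.sqrt (ln y^-1).
    by rewrite ler_pM2l// ler_sqrt// (le_trans (ltW ln2_gt0)).
  by rewrite ler_wpM2l// lef_pV2 ?posrE// (lt_le_trans den_gt0).
have sye : s <= g `^ (1 - e) * y `^ (a * e).
  by rewrite powRrM; apply: ler_powR_interpolate.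
rewrite ler_pdivrMr// [y `^ _]powRB ?(gt_eqF y0) ?implybT// powRr1 ?(ltW y0)//.
suff -> : g `^ (1 - e) / Num.sqrt (ln 2) * (y `^ (a * e) / y) * (y * Num.sqrt (ln 2))
    = g `^ (1 - e) * y `^ (a * e) by [].
by field; rewrite !gt_eqF ?sqrtr_gt0.
Qed.

Section power_shells.
Context {R : realType} {h : R}.
Hypotheses (h_gt0 : 0 < h) (h_lt1 : h < 1).

Definition power_shell (k : nat) : set R := `]h ^+ k.+2, h ^+ k.+1].

Let exprn_antitone m n : (m <= n)%N -> h ^+ n <= h ^+ m.
Proof. by move=> mn; rewrite ler_wiXn2l// ltW. Qed.

Lemma bigcup_power_shell : `]0, h]%classic = \bigcup_k power_shell k.
Proof.
apply/seteqP; split => y /=; last first.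
  move=> [k _]; rewrite /power_shell/= !in_itv/= => /andP[hy yh].
  by rewrite (lt_trans _ hy) ?exprn_gt0// (le_trans yh) ?(exprn_antitone 1 k.+1).
rewrite in_itv/= => /andP[y0 yh].
have h_norm : `|h| < 1 by rewrite ger0_norm ?ltW.
have [N _ hN] := cvgr_lt _ (cvg_expr h_norm) _ y0.
have ex_lt : exists n, h ^+ n < y by exists N; apply: hN => /=.
case: (ex_minnP ex_lt) => n hn n_min; exists (n - 2)%N => //.
have n_ge2 : (2 <= n)%N.
  rewrite leqNgt; apply/negP => n_lt2; move: (lt_le_trans hn yh).
  by rewrite -[X in _ < X]expr1 ltNge exprn_antitone// -ltnS.
rewrite /power_shell/= in_itv/= -addn2 subnK// hn/= leNgt; apply/negP.
by move/n_min; lia.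
Qed.

Lemma trivIset_power_shell : trivIset setT power_shell.
Proof.
apply/trivIsetP => i j _ _ ij; apply/seteqP; split => // y [].
rewrite /power_shell/= !in_itv/= => /andP[hi ih] /andP[hj jh].
wlog lt_ij : i j hi ih hj jh {ij} / (i < j)%N.
  by move=> wl; case: (ltngtP i j) ij => // ? _; [apply: (wl i j)|apply: (wl j i)].
by have := le_lt_trans (le_trans jh (exprn_antitone i.+2 j.+1 lt_ij)) hi; rewrite ltxx.
Qed.

Context {b : R}.
Hypotheses (b_gt0 : 0 < b) (b_le1 : b <= 1).

Lemma integral_power_shell_le k :
  (\int[lebesgue_measure]_(y in power_shell k) (y `^ (b - 1))%:E
     <= ((h^-1 - 1) * (h `^ b) ^+ k.+2)%:E)%E.
Proof.
set t := h ^+ k.+2; have t_gt0 : 0 < t by rewrite exprn_gt0.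
apply: (@le_trans _ _ (\int[lebesgue_measure]_(y in power_shell k) (t `^ (b - 1))%:E)%E).
  apply: ge0_le_integral_nonmeasurable => y; rewrite /power_shell/= in_itv/= => /andP[ty _].
    by rewrite lee_fin powR_ge0.
  by rewrite lee_fin le0_ger_powR ?subr_le0// ltW.
rewrite integral_cst/=; last exact: measurable_itv.
rewrite lebesgue_measure_itv/= lte_fin ltr_iXn2l// ltnSn -/t -EFinD -EFinM lee_fin.
have -> : h ^+ k.+1 - t = (h^-1 - 1) * t by rewrite /t !exprS; field; rewrite gt_eqF.
rewrite mulrCA [t `^ _ * t]mulrC mulr_powRB1 ?(ltW t_gt0)//.
suff -> : t `^ b = (h `^ b) ^+ k.+2 by [].
by rewrite /t -!powR_mulrn ?powR_ge0 ?ltW// -!powRrM mulrC.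
Qed.

Lemma powR_lt1 : h `^ b < 1.
Proof. by rewrite /powR gt_eqF// expR_lt1 pmulr_rlt0// ln_lt0 ?h_gt0. Qed.

Lemma integral_powR_le :
  (\int[lebesgue_measure]_(y in (`]0%R, h]%classic : set R)) (y `^ (b - 1))%:E
     <= ((h^-1 - 1) * (h `^ b) ^+ 2 / (1 - h `^ b))%:E)%E.
Proof.
set q := h `^ b; set c := h^-1 - 1.
have q_gt0 : 0 < q by rewrite powR_gt0.
have q_lt1 : q < 1 := powR_lt1.
have c_ge0 : 0 <= c by rewrite subr_ge0 invf_ge1 ?ltW.
rewrite bigcup_power_shell ge0_integral_bigcup//; last 4 first.
- by move=> k; exact: measurable_itv.
- by apply/measurable_EFinP; apply: measurable_funTS; exact: measurable_powR.
- by move=> y _; rewrite lee_fin powR_ge0.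
- exact: trivIset_power_shell.
apply: (le_trans (@lee_nneseries _ _ (fun k => (c * q ^+ k.+2)%:E) xpredT 0%N _ _)).
- by move=> k _ _; apply: integral_ge0 => y _; rewrite lee_fin powR_ge0.
- by move=> k _; exact: integral_power_shell_le.
apply: lime_le.
  by apply: is_cvg_ereal_nneg_natsum => k _; rewrite lee_fin mulr_ge0 ?exprn_ge0 ?(ltW q_gt0).
apply: nearW => n; rewrite sumEFin lee_fin.
have -> : \sum_(0 <= k < n) c * q ^+ k.+2 = series (geometric (c * q ^+ 2) q) n.
  by apply: eq_bigr => k _; rewrite /geometric/= -mulrA -exprD addnC addn2.
apply: geometric_le_lim => //; first by rewrite mulr_ge0 ?exprn_ge0 ?(ltW q_gt0).
by rewrite ger0_norm ?(ltW q_gt0).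
Qed.

End power_shells.

Lemma nbhs_right0_itv {R : realType} {P : R -> Prop} :
  (\forall x \near 0^'+, P x) -> exists2 e, 0 < e & forall x, 0 < x < e -> P x.
Proof.
move=> [e /= e_gt0 eP]; exists e => // x /andP[x_gt0 x_lte].
by apply: eP => //=; rewrite sub0r normrN gtr0_norm.
Qed.

Lemma nondecreasing_cvg0_ge0 {R : realType} {f : R -> R} {delta : R} :
  {in `]0, delta[ &, {homo f : x y / x <= y}} -> f x @[x --> 0^'+] --> 0 ->
  {in `]0, delta[, forall x, 0 <= f x}.
Proof.
move=> f_homo f_cvg0 y y_itv; have /andP[y_gt0 y_ltd] := y_itv.
apply: (cvgr_to_le f_cvg0); near=> z.
have z_gt0 : 0 < z by near: z; exact: nbhs_right_gt.
have z_lty : z < y by near: z; exact: nbhs_right_lt.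
by apply: f_homo; rewrite ?in_itv/= ?z_gt0 ?(lt_trans z_lty) ?(ltW z_lty).
Unshelve. all: by end_near. Qed.

Lemma ind_star_gt0_powR_le {R : realType} {gamma : R -> R} :
  (0 < ind_star gamma)%E -> exists a x1 : R,
    [/\ 0 < a <= 1, 0 < x1 <= 1 & forall x, 0 < x < x1 -> gamma x <= x `^ a].
Proof.
move=> /ereal_sup_gt[_ [a gamma_oa <-]]; rewrite lte_fin => a_gt0.
have [e e_gt0 ratio_lt1] := nbhs_right0_itv (cvgr_lt _ gamma_oa _ ltr01).
exists (Num.min a 1), (Num.min e 1); split.
- by rewrite lt_min a_gt0 ltr01 ge_min lexx orbT.
- by rewrite lt_min e_gt0 ltr01 ge_min lexx orbT.
move=> x /andP[x_gt0]; rewrite lt_min => /andP[x_lte x_lt1].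
apply: (@le_trans _ _ (x `^ a)).
  by have := ratio_lt1 x; rewrite x_gt0 x_lte => /(_ isT); rewrite ltr_pdivrMr ?powR_gt0// mul1r => /ltW.
by apply: ger_powR; rewrite ?x_gt0 ?(ltW x_lt1)// ge_min lexx.
Qed.

Section power_domination.
Context {R : realType} {gamma : R -> R} {delta : R}.
Hypothesis gamma_homo : {in `]0, delta[ &, {homo gamma : x y / x <= y}}.
Hypothesis gamma_cvg0 : gamma x @[x --> 0^'+] --> 0.
Context {a x1 : R}.
Hypotheses (a_ge0 : 0 <= a) (x1_le1 : x1 <= 1).
Hypothesis gamma_le_powR : forall x, 0 < x < x1 -> gamma x <= x `^ a.

Lemma gamma_mul_bounds {x y} : 0 < x < Num.min x1 delta -> 0 < y < 1 ->
  [/\ 0 <= gamma (x * y), gamma (x * y) <= gamma x & gamma (x * y) <= y `^ a].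
Proof.
move=> /andP[x_gt0]; rewrite lt_min => /andP[x_ltx1 x_ltd] /andP[y_gt0 y_lt1].
have xy_gt0 : 0 < x * y by rewrite mulr_gt0.
have xy_ltx : x * y < x by rewrite gtr_pMr.
have xy_itv : x * y \in `]0, delta[ by rewrite in_itv/= xy_gt0 (lt_trans xy_ltx).
split; first exact: nondecreasing_cvg0_ge0 gamma_homo gamma_cvg0 _ xy_itv.
  by apply: gamma_homo; rewrite ?in_itv/= ?x_gt0 ?ltW.
apply: le_trans (gamma_le_powR _ _) _; first by rewrite xy_gt0 (lt_trans xy_ltx).
by rewrite ge0_ler_powR ?nnegrE ?(ltW xy_gt0) ?(ltW y_gt0)// ger_pMl// (le_trans (ltW x_ltx1)).
Qed.

Lemma integral_gamma_mul_le {eps x} : 0 <= eps <= 1 -> 0 < x < Num.min x1 delta ->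
  (\int[lebesgue_measure]_(y in (`]0%R, (2^-1)%R]%classic : set R))
      (gamma (x * y) / (y * Num.sqrt (ln y^-1)))%:E
    <= (gamma x `^ (1 - eps) / Num.sqrt (ln 2))%:E *
       \int[lebesgue_measure]_(y in (`]0%R, (2^-1)%R]%classic : set R))
         (y `^ (a * eps - 1))%:E)%E.
Proof.
move=> eps_itv x_itv; set K := gamma x `^ (1 - eps) / Num.sqrt (ln 2).
have K_ge0 : 0 <= K by rewrite divr_ge0 ?powR_ge0 ?sqrtr_ge0.
have integrand_bounds y : 0 < y <= 2^-1 ->
    0 <= gamma (x * y) / (y * Num.sqrt (ln y^-1)) <= K * y `^ (a * eps - 1).
  move=> /[dup] y_itv /andP[y_gt0 y_le].
  have y_itv1 : 0 < y < 1 by rewrite y_gt0 (le_lt_trans y_le)// invf_lt1 ?ltr1n.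
  have [s_ge0 s_le s_le_pow] := gamma_mul_bounds x_itv y_itv1.
  rewrite divr_ge0 ?mulr_ge0 ?sqrtr_ge0 ?(ltW y_gt0)//=.
  by apply: div_sqrt_ln_inv_le; rewrite ?s_ge0.
rewrite -ge0_integralZl_EFin//; last 2 first.
- by move=> y _; rewrite lee_fin powR_ge0.
- by apply/measurable_EFinP; apply: measurable_funTS; exact: measurable_powR.
by apply: ge0_le_integral_nonmeasurable => y; rewrite /= in_itv/= => /integrand_bounds/andP[];
  rewrite -?EFinM lee_fin.
Qed.

End power_domination.

Theorem lemma3p1 (R : realType) (gamma : R -> R) (delta : R) :
  0 < delta ->
  {within `]0, delta[, continuous gamma} ->
  {in `]0, delta[ &, {homo gamma : x y / x <= y}} ->
  (forall x y t, x \in `]0, delta[ -> y \in `]0, delta[ -> 0 <= t <= 1 ->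
     t * gamma x + (1 - t) * gamma y <= gamma (t * x + (1 - t) * y)) ->
  gamma x @[x --> 0^'+] --> 0 ->
  (0 < ind_star gamma)%E ->
  forall eps : R, 0 < eps < 1 ->
  exists c : R, exists xe : R, 0 < c /\ 0 < xe /\
    forall x : R, 0 < x < xe ->
      (\int[@lebesgue_measure R]_(y in (`]0%R, (2^-1)%R]%classic : set R))
          ((gamma (x * y) / (y * Num.sqrt (ln (y^-1)))))%:E
        <= (c * gamma x `^ (1 - eps))%:E)%E.
Proof.
move=> delta_gt0 _ gamma_homo _ gamma_cvg0 ind_gt0 eps /andP[eps_gt0 eps_lt1].
have [a [x1 [/andP[a_gt0 a_le1] /andP[x1_gt0 x1_le1] gamma_le_powR]]] :=
  ind_star_gt0_powR_le ind_gt0.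
have h_gt0 : (0 : R) < 2^-1 by rewrite invr_gt0.
have h_lt1 : (2^-1 : R) < 1 by rewrite invf_lt1 ?ltr1n.
have b_gt0 : 0 < a * eps by rewrite mulr_gt0.
have b_le1 : a * eps <= 1 by rewrite mulr_ile1 ?(ltW a_gt0) ?(ltW eps_gt0) ?(ltW eps_lt1).
set q := (2^-1 : R) `^ (a * eps).
set M := (2^-1^-1 - 1) * q ^+ 2 / (1 - q).
have M_gt0 : 0 < M.
  by rewrite divr_gt0 ?mulr_gt0 ?exprn_gt0 ?powR_gt0 ?subr_gt0 ?powR_lt1// invrK ltr1n.
exists (M / Num.sqrt (ln 2)), (Num.min x1 delta).
split; first by rewrite divr_gt0 ?sqrtr_gt0 ?ln_gt0 ?ltr1n.
split => [|x x_itv]; first by rewrite lt_min x1_gt0.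
have eps_itv : 0 <= eps <= 1 by rewrite !ltW.
apply: le_trans (integral_gamma_mul_le gamma_homo gamma_cvg0 (ltW a_gt0) x1_le1
  gamma_le_powR eps_itv x_itv) _.
apply: le_trans (lee_wpmul2l _ (integral_powR_le h_gt0 h_lt1 b_gt0 b_le1)) _.
  by rewrite lee_fin divr_ge0 ?powR_ge0 ?sqrtr_ge0.
by rewrite -EFinM lee_fin -/M [leRHS]mulrC [leRHS]mulrA [leLHS]mulrAC.
Qed.
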